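(* Let $n,m \in \mathbb{N}$, $a \in \Delta_n^+$, $b \in \Delta_m^+$, $\lambda > 0$, and let $g \colon \mathbb{R}^{n\times m} \to \mathbb{R}$ be a function whose gradient $\nabla g$ exists. Define $T_\lambda \colon \mathbb{R}^{n\times m} \to \Pi_{a,b}^+$ by $T_\lambda = \Phi_\lambda \circ \nabla g$, i.e. \[ T_\lambda(A) = \operatorname{argmin}_{\pi \in \Pi_{a,b}} \big(\langle \nabla g(A), \pi\rangle + \lambda h(\pi)\big) \quad \forall A \in \mathbb{R}^{n\times m}. \] If $g$ is convex, then the problem $\min_{\pi \in \Pi_{a,b}} \big(g(\pi) + \lambda h(\pi)\big)$ admits a unique minimizer $\pi^\star$, this minimizer lies in $\Pi_{a,b}^+$, and $\pi^\star$ is the unique fixed point of $T_\lambda$, i.e. $\pi^\star = T_\lambda(\pi^\star)$ and $T_\lambda$ has no other fixed point.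
   Context: $\Delta_n^+ := \{a \in \mathbb{R}^n : a_i > 0\ \forall i,\ \sum_i a_i = 1\}$. $\Pi_{a,b} := \{\pi \in \mathbb{R}_+^{n\times m} : \pi 1_m = a,\ \pi^\top 1_n = b\}$ (couplings), and $\Pi_{a,b}^+ := \{\pi \in \Pi_{a,b} : \pi_{ij} > 0\ \forall i,j\}$. $h(\pi) := \sum_{i,j} \pi_{ij}\log\frac{\pi_{ij}}{e}$ (with $0\log 0 = 0$) is the entropy function. $\langle A, B\rangle = \mathrm{tr}(A^\top B)$ is the Frobenius inner product. For $C \in \mathbb{R}^{n\times m}$, $\Phi_\lambda(C) := \operatorname{argmin}_{\pi \in \Pi_{a,b}} (\langle C,\pi\rangle + \lambda h(\pi))$, which is a well-defined (unique) element of $\Pi_{a,b}^+$. *)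

From HB Require Import structures.
From mathcomp Require Import all_boot all_order all_algebra.
From mathcomp Require Import all_classical all_reals all_analysis.
Set Implicit Arguments. Unset Strict Implicit. Unset Printing Implicit Defensive.
Import Order.TTheory GRing.Theory Num.Theory.
Import numFieldNormedType.Exports.
Local Open Scope classical_set_scope.
Local Open Scope ring_scope.

Section Defs.
Variable R : realType.

Definition pos_simplex (n : nat) (a : 'I_n -> R) : Prop :=
  (forall i, 0 < a i) /\ \sum_(i < n) a i = 1.

Definition couplings (n m : nat) (a : 'I_n -> R) (b : 'I_m -> R)
  : set 'M[R]_(n, m) :=
  [set pi | (forall i j, 0 <= pi i j) /\
            (forall i, \sum_(j < m) pi i j = a i) /\
            (forall j, \sum_(i < n) pi i j = b j)].

Definition pos_couplings (n m : nat) (a : 'I_n -> R) (b : 'I_m -> R)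
  : set 'M[R]_(n, m) :=
  [set pi | couplings a b pi /\ forall i j, 0 < pi i j].

Definition frob (n m : nat) (A B : 'M[R]_(n, m)) : R :=
  \tr (A^T *m B).

Definition entropy (n m : nat) (pi : 'M[R]_(n, m)) : R :=
  \sum_(i < n) \sum_(j < m)
     (if pi i j == 0 then 0 else pi i j * ln (pi i j / expR 1)).

Definition is_argmin (T : Type) (S : set T) (f : T -> R) (x : T) : Prop :=
  S x /\ forall y, S y -> f x <= f y.

(* Phi_lambda(C) = argmin_{pi in Pi_{a,b}} <C,pi> + lambda h(pi)
   (chosen by classical choice; the minimizer is unique) *)
Definition Phi (n m : nat) (a : 'I_n -> R) (b : 'I_m -> R) (lam : R)
  (C : 'M[R]_(n, m)) : 'M[R]_(n, m) :=
  xget 0 (is_argmin (couplings a b) (fun pi => frob C pi + lam * entropy pi)).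

Definition grad (n m : nat) (g : 'M[R]_(n, m) -> R) (A : 'M[R]_(n, m))
  : 'M[R]_(n, m) :=
  \matrix_(i, j) ('D_(delta_mx i j) g A).

Definition Tmap (n m : nat) (a : 'I_n -> R) (b : 'I_m -> R) (lam : R)
  (g : 'M[R]_(n, m) -> R) (A : 'M[R]_(n, m)) : 'M[R]_(n, m) :=
  Phi a b lam (grad g A).

Definition convex_fun (n m : nat) (g : 'M[R]_(n, m) -> R) : Prop :=
  forall (A B : 'M[R]_(n, m)) (t : R), 0 <= t <= 1 ->
    g (t *: A + (1 - t) *: B) <= t * g A + (1 - t) * g B.

End Defs.

From HB Require Import structures.
From mathcomp Require Import all_boot all_order all_algebra.
From mathcomp Require Import all_classical all_reals all_analysis.
From mathcomp Require Import ring lra.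
Import Order.TTheory GRing.Theory Num.Theory.
Import numFieldNormedType.Exports.
Local Open Scope classical_set_scope.
Local Open Scope ring_scope.

Set Implicit Arguments. Unset Strict Implicit. Unset Printing Implicit Defensive.

(* The entropy [h] is strictly convex on couplings, so [g + lam h] has exactly one
   minimizer [pi*] on the compact convex set [Pi_{a,b}].  For convex differentiable [g],
   [pi] minimizes [g + lam h] iff it minimizes the linearized problem
   [<grad g pi, .> + lam h]: one direction is first-order optimality along segments,
   the other the gradient inequality [g pi + <grad g pi, y - pi> <= g y].  The
   linearized problem has the unique minimizer [Phi (grad g pi)], so the fixed points
   of [T] are exactly the minimizers of [g + lam h], i.e. [pi*].  Positivity: if a
   minimizer of a linear-plus-entropy problem had a zero entry, moving it by [t] towards
   [a b^T] would change the entropy term by [lam t p ln t], which beats the [O(t)]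
   change of the remaining terms as [t -> 0]. *)

Section entropy_density.
Variable R : realType.
Implicit Types x y z t u : R.

(* The summand of [entropy]; [ln] is [0] on nonpositive reals, hence [ent 0 = 0]. *)
Definition ent x : R := x * ln (x / expR 1).

Lemma ent_le0_eq0 x : x <= 0 -> ent x = 0.
Proof. by move=> x0; rewrite /ent ln0 ?mulr0 // pmulr_lle0 // invr_gt0 expR_gt0. Qed.

Lemma ent0 : ent 0 = 0.
Proof. exact: ent_le0_eq0. Qed.

Lemma entE x : 0 < x -> ent x = x * ln x - x.
Proof. by move=> x0; rewrite /ent ln_div ?posrE ?expR_gt0 // expRK mulrBr mulr1. Qed.

Lemma entM t x : 0 < t -> 0 < x -> ent (t * x) = t * ent x + t * x * ln t.
Proof.
by move=> t0 x0; rewrite !entE ?mulr_gt0 // lnM ?posrE //; ring.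
Qed.

Lemma ln_le_subr1 u : 0 < u -> ln u <= u - 1.
Proof. by move=> u0; have := @le_ln1Dx R (u - 1); rewrite subrKC; apply; lra. Qed.

(* Apply the weak bound to [sqrt u]: [ln u = 2 ln s <= 2 (s - 1) < s^2 - 1]. *)
Lemma ln_lt_subr1 u : 0 < u -> u != 1 -> ln u < u - 1.
Proof.
move=> u0 u1; set s := Num.sqrt u.
have s0 : 0 < s by rewrite sqrtr_gt0.
have us : u = s ^+ 2 by rewrite sqr_sqrtr // ltW.
have s1 : s != 1 by apply: contraNneq u1 => s1; rewrite us s1 expr1n.
have : 0 < (s - 1) ^+ 2 by rewrite exprn_even_gt0 // subr_eq0.
rewrite us lnXn // mulr2n; have := ln_le_subr1 s0; rewrite !expr2; nra.
Qed.

Lemma ent_tangent_lt z y : 0 < z -> 0 <= y -> y != z ->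
  ent z + ln z * (y - z) < ent y.
Proof.
move=> z0 y0 yz; rewrite entE //.
have [->|y_neq0] := eqVneq y 0; first by rewrite ent0; lra.
have {y0 y_neq0} y0 : 0 < y by rewrite lt_neqAle eq_sym y_neq0.
have zy0 : 0 < z / y by rewrite divr_gt0.
have zy1 : z / y != 1.
  by apply: contraNneq yz => /(canRL (divfK (lt0r_neq0 y0))); rewrite mul1r => ->.
have := ln_lt_subr1 zy0 zy1; rewrite ln_div ?posrE // -(ltr_pM2l y0).
by rewrite entE // !mulrBr mulrCA divff ?lt0r_neq0 // mulr1; lra.
Qed.

Lemma ent_tangent_le z y : 0 < z -> 0 <= y -> ent z + ln z * (y - z) <= ent y.
Proof.
move=> z0 y0; have [->|yz] := eqVneq y z; first by rewrite subrr mulr0 addr0.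
exact/ltW/ent_tangent_lt.
Qed.

(* Average the tangent inequalities at the (positive) convex combination. *)
Lemma ent_convex_lt x y t : 0 <= x -> 0 <= y -> x != y -> 0 < t < 1 ->
  ent (t * x + (1 - t) * y) < t * ent x + (1 - t) * ent y.
Proof.
move=> x0 y0 xy /andP[t0 t1]; set z := t * x + (1 - t) * y.
have z0 : 0 < z.
  have [x_eq0|x_neq0] := eqVneq x 0; last first.
    have : 0 < x by rewrite lt0r x_neq0.
    rewrite /z; nra.
  have : 0 < y by rewrite lt0r y0 andbT -x_eq0 eq_sym.
  by rewrite /z x_eq0; nra.
have xz : x != z.
  apply: contraNneq xy => xz; have : (1 - t) * (y - x) = 0 by rewrite /z in xz; lra.
  by move/eqP; rewrite mulf_eq0 subr_eq0 eq_sym => /orP[/eqP|//]; lra.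
have <- : t * (ent z + ln z * (x - z)) + (1 - t) * (ent z + ln z * (y - z)) = ent z.
  by rewrite /z; ring.
apply: ltr_leD; first by rewrite ltr_pM2l // ent_tangent_lt.
by rewrite ler_wpM2l ?subr_ge0 ?ent_tangent_le // ltW.
Qed.

Lemma ent_convex x y t : 0 <= x -> 0 <= y -> 0 <= t <= 1 ->
  ent (t * x + (1 - t) * y) <= t * ent x + (1 - t) * ent y.
Proof.
move=> x0 y0 /andP[t0 t1].
have [<-|xy] := eqVneq x y; first by rewrite -!mulrDl subrKC !mul1r.
have [->|tn0] := eqVneq t 0; first by rewrite !mul0r !add0r subr0 !mul1r.
have [->|tn1] := eqVneq t 1; first by rewrite subrr !mul0r !addr0 !mul1r.
by apply/ltW/ent_convex_lt => //; rewrite !lt_neqAle eq_sym tn0 tn1 t0 t1.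
Qed.

Lemma ent_le0 x : x <= 1 -> ent x <= 0.
Proof.
move=> x1; have [x0|x0] := leP x 0; first by rewrite ent_le0_eq0.
by rewrite entE // subr_le0 ger_pMr // (le_trans (ln_le_subr1 x0)); lra.
Qed.

(* With [s = sqrt x]: [x ln x = 2 s^2 ln s >= 2 s (s - 1) >= -2 s] and [x <= s]. *)
Lemma ent_ge_sqrt x : x <= 1 -> - 3 * Num.sqrt `|x| <= ent x.
Proof.
move=> x1; have [x0|x0] := leP x 0.
  by rewrite ent_le0_eq0 // mulNr oppr_le0 mulr_ge0 ?sqrtr_ge0.
rewrite gtr0_norm // entE //; set s := Num.sqrt x.
have s0 : 0 < s by rewrite sqrtr_gt0.
have xs : x = s ^+ 2 by rewrite sqr_sqrtr // ltW.
have s1 : s <= 1 by rewrite -sqrtr1 ler_sqrt.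
have : s - 1 <= s * ln s.
  have /ln_le_subr1 : 0 < s^-1 by rewrite invr_gt0.
  rewrite lnV ?posrE // -(ler_pM2l s0) mulrBr mulfV ?gt_eqF // mulrN mulr1; lra.
by rewrite xs lnXn // mulr2n !expr2; nra.
Qed.

Lemma continuous_ent x : 0 <= x -> {for x, continuous ent}.
Proof.
rewrite le_eqVlt => /orP[/eqP<-|x0]; last first.
  apply: cvgM; first exact: cvg_id.
  apply: (continuous_comp (cvgMl cvg_id)).
  by apply: continuous_ln; rewrite divr_gt0 // expR_gt0.
apply: (@squeeze_cvgr _ (nbhs (0 : R)) _ _ (fun y => - 3 * Num.sqrt `|y|) (cst 0)).
- near=> y; have y1 : y <= 1 by near: y; exact: (@cvgr_le R _ _ _ id 0 cvg_id 1 ltr01).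
  by rewrite ent_ge_sqrt ?ent_le0.
- rewrite ent0 -[X in _ --> X](_ : - 3 * Num.sqrt `|0 : R| = 0); last first.
    by rewrite normr0 sqrtr0 mulr0.
  apply: cvgMr; exact: (continuous_comp (@norm_continuous _ R 0) (@sqrt_continuous R _)).
- rewrite ent0; exact: cvg_cst.
Unshelve. all: by end_near. Qed.

End entropy_density.

Section continuity.
Variable R : realType.

Lemma cvg_sum_for (T : topologicalType) (I : Type) (r : seq I) (F : I -> T -> R) x :
  (forall i, {for x, continuous (F i)}) ->
  {for x, continuous (fun y => \sum_(i <- r) F i y)}.
Proof.
by move=> Fc; apply: cvg_big => //; [exact: (@add_continuous R^o)|move=> i _; exact: Fc].
Qed.

Lemma closed_bigcap (T : topologicalType) (I : Type) (A : I -> set T) :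
  (forall i, closed (A i)) -> closed [set x | forall i, A i x].
Proof.
move=> Ac; have := closed_bigI (fun i (_ : setT i) => Ac i).
by congr closed; apply/seteqP; split => x /= Ax i => [|_]; exact: Ax.
Qed.

End continuity.

Section matrices.
Variables (R : realType) (n m : nat).
Implicit Types (x y C : 'M[R]_(n, m)) (t : R).

Lemma entropyE x : entropy x = \sum_i \sum_j ent (x i j).
Proof.
by apply: eq_bigr => i _; apply: eq_bigr => j _; case: eqP => [->|//]; rewrite ent0.
Qed.

Lemma frobE C x : frob C x = \sum_i \sum_j C i j * x i j.
Proof.
rewrite /frob /mxtrace exchange_big /=; apply: eq_bigr => j _.
by rewrite mxE; apply: eq_bigr => i _; rewrite mxE.
Qed.

Lemma frobD C x y : frob C (x + y) = frob C x + frob C y.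
Proof. by rewrite /frob mulmxDr mxtraceD. Qed.

Lemma frobB C x y : frob C (x - y) = frob C x - frob C y.
Proof. by rewrite /frob mulmxBr raddfB. Qed.

Lemma frobZ C t x : frob C (t *: x) = t * frob C x.
Proof. by rewrite /frob -scalemxAr mxtraceZ. Qed.

Lemma frob_convex C : convex_fun (frob C).
Proof. by move=> x y t _; rewrite frobD !frobZ. Qed.

Lemma continuous_frob C : continuous (frob C).
Proof.
move=> x; rewrite (_ : frob C = fun y => \sum_i \sum_j C i j * y i j).
  apply: cvg_sum_for => i; apply: cvg_sum_for => j.
  exact: cvgM (cvg_cst _) (@coord_continuous _ _ _ i j x).
by apply/funext => y; rewrite frobE.
Qed.

Lemma frob_grad (g : 'M[R]_(n, m) -> R) x y : differentiable g x ->
  frob (grad g x) y = 'D_y g x.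
Proof.
move=> dg; rewrite frobE deriveE // [in RHS](matrix_sum_delta y) !linear_sum /=.
apply: eq_bigr => i _; rewrite linear_sum /=; apply: eq_bigr => j _.
by rewrite linearZ /= mxE -deriveE // mulrC.
Qed.

Lemma continuous_entropy x : (forall i j, 0 <= x i j) -> {for x, continuous (@entropy R n m)}.
Proof.
move=> x0; rewrite (_ : @entropy R n m = fun y => \sum_i \sum_j ent (y i j)); last first.
  by apply/funext => y; rewrite entropyE.
apply: cvg_sum_for => i; apply: cvg_sum_for => j.
exact: (continuous_comp (@coord_continuous _ _ _ i j x) (continuous_ent (x0 i j))).
Qed.

Lemma entropy_convex x y t : (forall i j, 0 <= x i j) -> (forall i j, 0 <= y i j) ->
  0 <= t <= 1 -> entropy (t *: x + (1 - t) *: y) <= t * entropy x + (1 - t) * entropy y.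
Proof.
move=> x0 y0 t_cc; rewrite !entropyE !mulr_sumr -big_split /=.
apply: ler_sum => i _; rewrite !mulr_sumr -big_split /=; apply: ler_sum => j _.
by rewrite !mxE; exact: ent_convex.
Qed.

Lemma entropy_convex_lt x y t : (forall i j, 0 <= x i j) -> (forall i j, 0 <= y i j) ->
  x != y -> 0 < t < 1 ->
  entropy (t *: x + (1 - t) *: y) < t * entropy x + (1 - t) * entropy y.
Proof.
move=> x0 y0 /eqP xy t01; have t_cc : 0 <= t <= 1 by case/andP: t01 => *; rewrite !ltW.
have [i0 [j0 xy0]] : exists i j, x i j != y i j.
  apply: contrapT => /forallNP xy_eq; apply: xy; apply/matrixP => i j.
  by apply/eqP; apply: contrapT => /negP xy_ne; apply: (xy_eq i); exists j.
rewrite !entropyE !mulr_sumr -big_split /= (bigD1 i0) // [ltRHS](bigD1 i0) //=.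
rewrite ltr_leD //.
  rewrite !mulr_sumr -big_split /= (bigD1 j0) // [ltRHS](bigD1 j0) //=.
  rewrite ltr_leD ?mxE ?ent_convex_lt //.
  by apply: ler_sum => j _; rewrite !mxE ent_convex.
apply: ler_sum => i _; rewrite !mulr_sumr -big_split /=; apply: ler_sum => j _.
by rewrite !mxE; exact: ent_convex.
Qed.

Lemma entropy_mix_zero_entry x y t i0 j0 :
  (forall i j, 0 <= x i j) -> (forall i j, 0 <= y i j) -> 0 < t <= 1 ->
  x i0 j0 = 0 -> 0 < y i0 j0 ->
  entropy (t *: y + (1 - t) *: x) <=
    t * entropy y + (1 - t) * entropy x + t * y i0 j0 * ln t.
Proof.
move=> x0 y0 /andP[t0 t1] x00 y00; have t_cc : 0 <= t <= 1 by rewrite ltW.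
set D := fun i j => ent ((t *: y + (1 - t) *: x) i j) -
  (t * ent (y i j) + (1 - t) * ent (x i j)).
have D_le0 i j : D i j <= 0 by rewrite subr_le0 !mxE ent_convex.
have <- : D i0 j0 = t * y i0 j0 * ln t.
  by rewrite /D !mxE x00 mulr0 addr0 entM // ent0 mulr0 addr0; ring.
have -> : entropy (t *: y + (1 - t) *: x) =
    t * entropy y + (1 - t) * entropy x + \sum_i \sum_j D i j.
  rewrite !entropyE !mulr_sumr -!big_split /=; apply: eq_bigr => i _.
  by rewrite !mulr_sumr -!big_split /=; apply: eq_bigr => j _; rewrite /D subrKC.
rewrite lerD2l (bigD1 i0) //= (bigD1 j0) //= -addrA gerDl.
by rewrite -oppr_ge0 opprD addr_ge0 ?oppr_ge0 ?sumr_le0 // => i _; rewrite sumr_le0.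
Qed.

End matrices.

Lemma continuous_vec_mx (R : realType) (n m : nat) : continuous (@vec_mx R n m).
Proof.
move=> v A /= /(nbhs_ballP (vec_mx v)) [e e0 eA].
apply/nbhs_ballP; exists e => //= w [_ vw]; apply: eA; split => // i j.
by rewrite !mxE; exact: vw.
Qed.

Section couplings.
Variables (R : realType) (n m : nat) (a : 'I_n -> R) (b : 'I_m -> R).
Implicit Types (x y : 'M[R]_(n, m)) (t : R).
Local Notation S := (couplings a b).

Lemma couplings_ge0 x : S x -> forall i j, 0 <= x i j.
Proof. by case. Qed.

Lemma couplings_convex x y t : S x -> S y -> 0 <= t <= 1 -> S (t *: x + (1 - t) *: y).
Proof.
move=> [x0 [xa xb]] [y0 [ya yb]] /andP[t0 t1]; split; [|split].
- by move=> i j; rewrite !mxE; have := x0 i j; have := y0 i j; nra.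
- move=> i; under eq_bigr do rewrite !mxE.
  by rewrite big_split /= -!mulr_sumr xa ya; ring.
- move=> j; under eq_bigr do rewrite !mxE.
  by rewrite big_split /= -!mulr_sumr xb yb; ring.
Qed.

Lemma couplings_le1 x : pos_simplex a -> S x -> forall i j, x i j <= 1.
Proof.
move=> [a0 a1] [x0 [xa _]] i j; apply: (@le_trans _ _ (a i)).
  by rewrite -xa (bigD1 j) //= lerDl sumr_ge0.
by rewrite -a1 (bigD1 i) //= lerDl sumr_ge0 // => k _; exact: ltW.
Qed.

Definition prod_coupling : 'M[R]_(n, m) := \matrix_(i, j) (a i * b j).

Lemma prod_coupling_pos : pos_simplex a -> pos_simplex b -> pos_couplings a b prod_coupling.
Proof.
move=> [a0 a1] [b0 b1]; split; last by move=> i j; rewrite mxE mulr_gt0.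
split; [|split].
- by move=> i j; rewrite mxE ltW // mulr_gt0.
- by move=> i; under eq_bigr do rewrite mxE; rewrite -mulr_sumr b1 mulr1.
- by move=> j; under eq_bigr do rewrite mxE; rewrite -mulr_suml a1 mul1r.
Qed.

Lemma couplings_closed : closed S.
Proof.
apply: closedI; [|apply: closedI].
- apply: closed_bigcap => i; apply: closed_bigcap => j.
  apply: (@preimage_closed _ _ (fun x : 'M[R]_(n, m) => x i j) [set r | 0 <= r]).
    by move=> x _; exact: coord_continuous.
  exact: closed_ge.
- apply: closed_bigcap => i.
  apply: (@preimage_closed _ _ (fun x : 'M[R]_(n, m) => \sum_j x i j) [set r | r = a i]).
    by move=> x _; apply: cvg_sum_for => j; exact: coord_continuous.
  exact: closed_eq.
- apply: closed_bigcap => j.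
  apply: (@preimage_closed _ _ (fun x : 'M[R]_(n, m) => \sum_i x i j) [set r | r = b j]).
    by move=> x _; apply: cvg_sum_for => i; exact: coord_continuous.
  exact: closed_eq.
Qed.

Lemma couplings_compact : pos_simplex a -> compact S.
Proof.
move=> pa; set box := [set v : 'rV[R]_(n * m) | forall k, `[(0 : R), 1]%classic (v ord0 k)].
have box_compact : compact box.
  by apply: (@rV_compact _ _ (fun=> `[(0 : R), 1]%classic)) => _; exact: segment_compact.
apply: (subclosed_compact couplings_closed (continuous_compact _ box_compact)).
  exact/continuous_subspaceT/continuous_vec_mx.
move=> x Sx; exists (mxvec x); last exact: mxvecK.
case/mxvec_indexP => i j; rewrite mxvecE /= in_itv /=.
by rewrite couplings_ge0 ?couplings_le1.
Qed.

End couplings.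

Lemma segmentE (R : ringType) (V : lmodType R) (x y : V) (t : R) :
  x + t *: (y - x) = t *: y + (1 - t) *: x.
Proof. by rewrite scalerBr scalerBl scale1r addrCA. Qed.

Section one_sided_derivative.
Variables (R : realType) (V : normedModType R) (f : V -> R) (x v : V).
Hypothesis df : derivable f x v.

Let quotient_cvg : (fun t => (f (x + t *: v) - f x) / t) @ 0^'+ --> 'D_v f x.
Proof.
rewrite /derive cvg_at_rightE // -cvg_at_rightE //.
under eq_fun do rewrite mulrC (addrC x).
apply: cvg_trans df; apply: cvg_app.
by move=> A [e e0 Ae]; exists e => // t te /lt0r_neq0; exact: Ae.
Qed.

Let near_unit_interval : \forall t \near (0 : R)^'+, 0 < t <= 1.
Proof.
near=> t; apply/andP; split; near: t; first by exists 1 => /=.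
by exists 1 => //= t; rewrite /ball_ /= sub0r normrN => /ltW/(le_trans (ler_norm _)).
Unshelve. all: by end_near. Qed.

Lemma derive_ge_quotient c :
  (forall t, 0 < t <= 1 -> c <= (f (x + t *: v) - f x) / t) -> c <= 'D_v f x.
Proof.
move=> Hc; apply: (cvgr_to_ge quotient_cvg).
by apply: filterS near_unit_interval => t; exact: Hc.
Qed.

Lemma derive_le_quotient c :
  (forall t, 0 < t <= 1 -> (f (x + t *: v) - f x) / t <= c) -> 'D_v f x <= c.
Proof.
move=> Hc; apply: (cvgr_to_le quotient_cvg).
by apply: filterS near_unit_interval => t; exact: Hc.
Qed.

End one_sided_derivative.

Lemma convex_grad_le (R : realType) (n m : nat) (g : 'M[R]_(n, m) -> R) x y :
  convex_fun g -> differentiable g x -> g x + frob (grad g x) (y - x) <= g y.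
Proof.
move=> cg dg; rewrite frob_grad // -lerBrDl.
apply: derive_le_quotient; first exact: diff_derivable.
move=> t /andP[t0 t1]; rewrite ler_pdivrMr // segmentE.
by have := cg y x t; rewrite t1 ltW //=; lra.
Qed.

Section entropic_argmin.
Variables (R : realType) (n m : nat) (a : 'I_n -> R) (b : 'I_m -> R) (lam : R).
Hypothesis lam0 : 0 < lam.
Implicit Types (x y : 'M[R]_(n, m)) (C : 'M[R]_(n, m)) (g : 'M[R]_(n, m) -> R).
Local Notation S := (couplings a b).
Local Notation regularized f := (fun x => f x + lam * entropy x).

Lemma argmin_linearize g x : differentiable g x ->
  is_argmin S (regularized g) x -> is_argmin S (regularized (frob (grad g x))) x.
Proof.
move=> dg [Sx xmin]; split => // y Sy.
suff : lam * (entropy x - entropy y) <= frob (grad g x) (y - x) by rewrite frobB; lra.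
rewrite frob_grad //; apply: derive_ge_quotient; first exact: diff_derivable.
move=> t /andP[t0 t1]; have t_cc : 0 <= t <= 1 by rewrite ltW.
rewrite ler_pdivlMr // segmentE.
have := xmin _ (couplings_convex Sy Sx t_cc).
have := entropy_convex (couplings_ge0 Sy) (couplings_ge0 Sx) t_cc.
by move=> /(ler_wpM2l (ltW lam0)); lra.
Qed.

Lemma argmin_of_linearized g x : convex_fun g -> differentiable g x ->
  is_argmin S (regularized (frob (grad g x))) x -> is_argmin S (regularized g) x.
Proof.
move=> cg dg [Sx xmin]; split => // y Sy.
have := xmin _ Sy; have := convex_grad_le y cg dg; rewrite frobB; lra.
Qed.

Lemma argmin_unique g x y : convex_fun g ->
  is_argmin S (regularized g) x -> is_argmin S (regularized g) y -> x = y.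
Proof.
move=> cg [Sx xmin] [Sy ymin]; apply/eqP/negPn/negP => xy.
have half01 : 0 <= (2^-1 : R) <= 1 by apply/andP; split; lra.
have := xmin _ (couplings_convex Sx Sy half01); have := ymin _ Sx; have := cg x y _ half01.
have : entropy (2^-1 *: x + (1 - 2^-1) *: y) < 2^-1 * entropy x + (1 - 2^-1) * entropy y.
  apply: (entropy_convex_lt (couplings_ge0 Sx) (couplings_ge0 Sy) xy).
  by apply/andP; split; lra.
by rewrite -(ltr_pM2l lam0); lra.
Qed.

Lemma argmin_linear_pos C x : pos_simplex a -> pos_simplex b ->
  is_argmin S (regularized (frob C)) x -> forall i j, 0 < x i j.
Proof.
move=> pa pb [Sx xmin] i0 j0; rewrite lt0r (couplings_ge0 Sx) andbT.
apply/negP => /eqP x00; have [p0S p0pos] := prod_coupling_pos pa pb.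
set p0 := prod_coupling a b in p0S p0pos *; set p := p0 i0 j0.
have p_gt0 : 0 < lam * p by rewrite mulr_gt0 // p0pos.
set K := frob C (p0 - x) + lam * (entropy p0 - entropy x).
set t := expR (- ((`|K| + 1) / (lam * p))).
have t0 : 0 < t by rewrite expR_gt0.
have t1 : t <= 1 by rewrite expR_le1 oppr_le0 divr_ge0 // ?addr_ge0 // ltW.
have gain : lam * p * ln t = - (`|K| + 1) by rewrite expRK mulrN mulrC divfK ?gt_eqF.
have t_cc : 0 <= t <= 1 by rewrite ltW.
have t_oc : 0 < t <= 1 by rewrite t0.
have := xmin _ (couplings_convex p0S Sx t_cc); rewrite frobD !frobZ.
have /(ler_wpM2l (ltW lam0)) := entropy_mix_zero_entry (couplings_ge0 Sx)
  (couplings_ge0 p0S) t_oc x00 (p0pos i0 j0); rewrite -/p.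
have : t * (frob C p0 - frob C x + lam * (entropy p0 - entropy x)) <= t * `|K|.
  by rewrite -frobB ler_pM2l // ler_norm.
have : t * (lam * p * ln t) = - t * (`|K| + 1) by rewrite gain mulrN mulNr.
lra.
Qed.

Lemma exists_argmin f : pos_simplex a -> pos_simplex b ->
  (forall x, S x -> {for x, continuous f}) -> exists x, is_argmin S (regularized f) x.
Proof.
move=> pa pb fc; have S_neq0 : S !=set0.
  by exists (prod_coupling a b); case: (prod_coupling_pos pa pb).
have F_cont : {within S, continuous (regularized f)}.
  apply: continuous_in_subspaceT => x /set_mem Sx; apply: (cvgD (fc x Sx)).
  exact: cvgM (cvg_cst lam) (continuous_entropy (couplings_ge0 Sx)).
have [x /set_mem Sx xmin] := compact_EVT_min S_neq0 (couplings_compact pa) F_cont.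
by exists x; split => // y Sy; apply: xmin; exact: mem_set.
Qed.

Lemma Phi_argmin C : pos_simplex a -> pos_simplex b ->
  is_argmin S (regularized (frob C)) (Phi a b lam C).
Proof.
move=> pa pb; apply: xgetPex; apply: exists_argmin => // x _.
exact: continuous_frob.
Qed.

Lemma Phi_eq C x : is_argmin S (regularized (frob C)) x -> Phi a b lam C = x.
Proof.
move=> xmin; apply: xget_unique => // y ymin.
exact: argmin_unique (frob_convex C) ymin xmin.
Qed.

End entropic_argmin.

Theorem proposition2 (R : realType) (n m : nat)
  (a : 'I_n -> R) (b : 'I_m -> R) (lam : R) (g : 'M[R]_(n, m) -> R) :
  pos_simplex a -> pos_simplex b -> 0 < lam ->
  (forall A : 'M[R]_(n, m), differentiable g A) ->
  convex_fun g ->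
  exists pistar : 'M[R]_(n, m),
    [/\ is_argmin (couplings a b) (fun pi => g pi + lam * entropy pi) pistar,
        (forall pi, is_argmin (couplings a b)
                      (fun pi => g pi + lam * entropy pi) pi -> pi = pistar),
        pos_couplings a b pistar,
        Tmap a b lam g pistar = pistar &
        (forall A, Tmap a b lam g A = A -> A = pistar)].
Proof.
move=> pa pb lam0 dg cg.
have [ps ps_min] := exists_argmin lam pa pb (fun x _ => differentiable_continuous (dg x)).
have ps_lin := argmin_linearize lam0 (dg ps) ps_min.
exists ps; split => //.
- by move=> y y_min; exact: (argmin_unique lam0 cg y_min ps_min).
- by split; [case: ps_min | exact: (argmin_linear_pos lam0 pa pb ps_lin)].
- exact: (Phi_eq lam0 ps_lin).
- move=> A TA; apply: (argmin_unique lam0 cg _ ps_min).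
  apply: (argmin_of_linearized cg (dg A)).
  by rewrite -[X in is_argmin _ _ X]TA; exact: (Phi_argmin lam _ pa pb).
Qed.
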